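(* Let $\mu$ be a positive real with $\mu\le\frac{1}{225}$. Let $G$ be an $n$-vertex graph of minimum degree at least $15\sqrt{\mu}\,n$, and let $\mathcal{F}$ be a $\mu n$-bounded incompatibility system over $G$. Suppose $P=(v_0,v_1,\dots,v_\ell)$ is a smooth path in $G$ such that there is no vertex $w\notin V(P)$ for which $(w,v_0,\dots,v_\ell)$ is a smooth path. Then there exists a subset $X$ of the set of good neighbors of $v_0$ in $P$ with $|X|\ge d(v_0)-14\sqrt{\mu}\,n$ such that for every $v_i\in X$ the path $(v_{i-1},\dots,v_1,v_0,v_i,v_{i+1},\dots,v_\ell)$ is smooth.
   Context: All graphs are finite and simple; $d(v)$ is the degree of $v$. An incompatibility system $\mathcal{F}$ over $G=(V,E)$ is a family $\{F_v\}_{v\in V}$ where each $F_v$ is a set of unordered pairs $\{e,e'\}$ of distinct edges with $e\cap e'=\{v\}$; edges $e,e'$ are incompatible if $\{e,e'\}\in F_v$ for some $v$, compatible otherwise. A subgraph (path, cycle) is compatible with $\mathcal{F}$ if every pair of its edges is compatible. For a positive real $\Delta$, $\mathcal{F}$ is $\Delta$-bounded if for every vertex $v$ and edge $e\ni v$, at most $\Delta$ other edges $e'\ni v$ satisfy $\{e,e'\}\in F_v$. For a path $P=(v_0,\dots,v_\ell)$, $|P|$ is its number of vertices. For a vertex $w$, a vertex $v_i\in V(P)$ adjacent to $w$ is a bad neighbor of $w$ in $P$ if $\{w,v_i\}$ is incompatible with $\{v_i,v_{i-1}\}$ or with $\{v_i,v_{i+1}\}$ (for those of these that are edges of $P$),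 and a good neighbor otherwise. For $\gamma>0$, $w$ is $\gamma$-bad for $P$ if it has at least $\gamma|P|$ bad neighbors in $P$, and $\gamma$-good otherwise. Two vertices $v_1,v_2$ are $\gamma$-correlated if there are at least $\gamma n$ vertices $w$ such that $\{v_1,w\}$ and $\{v_2,w\}$ are incompatible edges; otherwise $\gamma$-uncorrelated. For an $n$-vertex graph with a $\mu n$-bounded system $\mathcal{F}$, a path $P=(v_0,\dots,v_\ell)$ is smooth (smoothly compatible with $\mathcal{F}$) if (i) $P$ is compatible with $\mathcal{F}$, (ii) both $v_0$ and $v_\ell$ are $8\sqrt{\mu}$-good for $P$, and (iii) $v_0$ and $v_\ell$ are $\sqrt{\mu}$-uncorrelated. *)

From mathcomp Require Import all_boot all_order all_algebra.
Set Implicit Arguments. Unset Strict Implicit. Unset Printing Implicit Defensive.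
Import Order.TTheory GRing.Theory Num.Theory.
Local Open Scope ring_scope.

Section Defs.
Variables (T : finType) (e : rel T).

Definition simple_graph := symmetric e /\ irreflexive e.

Definition deg (v : T) : nat := #|[set u | e v u]|.

(* An incompatibility system is encoded by inc : T -> T -> T -> bool, where
   inc v a b means the pair {{v,a},{v,b}} belongs to F_v. *)
Definition incsys (inc : T -> T -> T -> bool) :=
  (forall v a b, inc v a b -> [&& e v a, e v b & a != b]) /\
  (forall v a b, inc v a b = inc v b a).

Variable inc : T -> T -> T -> bool.

Definition same_edge (a b c d : T) : bool :=
  ((a == c) && (b == d)) || ((a == d) && (b == c)).

Definition edge_incomp (a b c d : T) : bool :=
  [exists v, exists x, exists y,
     [&& inc v x y, same_edge v x a b & same_edge v y c d]].

Definition bounded {R : numDomainType} (Delta : R) :=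
  forall v a, e v a -> (#|[set b | inc v a b]|%:R <= Delta).

Definition is_gpath (p : seq T) : bool :=
  match p with [::] => false | x :: s => path e x s && uniq p end.

Definition compatible_path (p : seq T) : Prop :=
  forall x0 (i j : nat), (i.+1 < size p)%N -> (j.+1 < size p)%N ->
    ~~ edge_incomp (nth x0 p i) (nth x0 p i.+1) (nth x0 p j) (nth x0 p j.+1).

Definition is_bad_nb (p : seq T) (w x : T) : bool :=
  let i := index x p in
  [&& x \in p, e w x &
    ((0 < i)%N && edge_incomp w x x (nth x p i.-1))
    || ((i.+1 < size p)%N && edge_incomp w x x (nth x p i.+1))].

Definition is_good_nb (p : seq T) (w x : T) : bool :=
  [&& x \in p, e w x & ~~ is_bad_nb p w x].

Definition bad_nbrs (p : seq T) (w : T) : {set T} := [set x | is_bad_nb p w x].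
Definition good_nbrs (p : seq T) (w : T) : {set T} := [set x | is_good_nb p w x].

Definition gamma_bad {R : numDomainType} (gamma : R) (p : seq T) (w : T) : bool :=
  gamma * (size p)%:R <= #|bad_nbrs p w|%:R.
Definition gamma_good {R : numDomainType} (gamma : R) (p : seq T) (w : T) : bool :=
  ~~ gamma_bad gamma p w.

Definition gamma_correlated {R : numDomainType} (gamma : R) (v1 v2 : T) : bool :=
  gamma * #|T|%:R <= #|[set w | edge_incomp v1 w v2 w]|%:R.
Definition gamma_uncorrelated {R : numDomainType} (gamma : R) (v1 v2 : T) : bool :=
  ~~ gamma_correlated gamma v1 v2.

Definition smooth {R : rcfType} (mu : R) (p : seq T) : Prop :=
  is_gpath p /\ compatible_path p /\
  (forall x0, let v0 := head x0 p in let vl := last x0 p in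
     [/\ gamma_good (8 * Num.sqrt mu) p v0,
         gamma_good (8 * Num.sqrt mu) p vl &
         gamma_uncorrelated (Num.sqrt mu) v0 vl]).

Definition reroute (p : seq T) (x : T) : seq T :=
  rev (take (index x p) p) ++ drop (index x p) p.

End Defs.

(* A vertex is heavy if it has at least 7 sqrt(mu) |P| bad neighbours on P.  Every
   vertex of P is a bad neighbour of at most 2 mu n vertices, so double counting gives
   at most 2 sqrt(mu) n / 7 heavy vertices; likewise at most sqrt(mu) n vertices are
   sqrt(mu)-correlated with v_l.  Both (w, v_0, ..., v_l) and the rerouted path
   (v_(i-1), ..., v_0, v_i, ..., v_l) differ from P by a single new edge at v_0, so they
   stay smooth unless that edge conflicts with P (a set of size at most
   2 mu n + sqrt(mu) n) or the new endpoint is heavy or correlated with v_l.  By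
   maximality every neighbour of v_0 outside P is exceptional in this sense, which
   forces |P| >= 12 sqrt(mu) n and leaves at least d(v_0) - 14 sqrt(mu) n good
   neighbours v_i of v_0 on P for which neither v_i nor v_(i-1) is exceptional. *)

From mathcomp Require Import all_boot all_order all_algebra.
From mathcomp Require Import lra.
Import Order.TTheory GRing.Theory Num.Theory.
Set Implicit Arguments. Unset Strict Implicit. Unset Printing Implicit Defensive.
Local Open Scope ring_scope.

Section Edges.
Variable T : finType.
Implicit Types a b c d v w x y : T.

Lemma same_edgeP a b c d :
  reflect ((a = c /\ b = d) \/ (a = d /\ b = c)) (same_edge a b c d).
Proof.
apply: (iffP orP) => [[]/andP[/eqP-> /eqP->]|[][-> ->]]; rewrite ?eqxx; by [left|right].
Qed.

Lemma same_edge_refl a b : same_edge a b a b.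
Proof. by apply/same_edgeP; left. Qed.

Lemma same_edgeC a b c d : same_edge a b c d = same_edge c d a b.
Proof. by apply/same_edgeP/same_edgeP => -[][-> ->]; [left|right|left|right]. Qed.

Lemma same_edge_flipl a b c d : same_edge a b c d = same_edge b a c d.
Proof. by apply/same_edgeP/same_edgeP => -[][-> ->]; [right|left|right|left]. Qed.

Lemma same_edge_flipr a b c d : same_edge a b c d = same_edge a b d c.
Proof. by apply/same_edgeP/same_edgeP => -[][-> ->]; [right|left|right|left]. Qed.

Variable inc : T -> T -> T -> bool.

Lemma edge_incompP a b c d :
  reflect (exists v x y, [/\ inc v x y, same_edge v x a b & same_edge v y c d])
          (edge_incomp inc a b c d).
Proof.
apply: (iffP existsP) => [[v /existsP[x /existsP[y /and3P[]]]]|[v [x [y [H s1 s2]]]]].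
  by exists v, x, y.
by exists v; apply/existsP; exists x; apply/existsP; exists y; rewrite H s1 s2.
Qed.

Lemma edge_incomp_flipr a b c d : edge_incomp inc a b c d = edge_incomp inc a b d c.
Proof.
apply/edge_incompP/edge_incompP => -[v [x [y [H s1 s2]]]];
  by rewrite same_edge_flipr in s2; exists v, x, y.
Qed.

Variable e : rel T.
Hypotheses (sg : simple_graph e) (isy : incsys e inc).

Lemma incsys_neq v a b : inc v a b -> [/\ a != b, v != a & v != b].
Proof.
have [_ irr] := sg; move/isy.1 => /and3P[eva evb ->]; split => //.
  by apply: contraTneq eva => ->; rewrite irr.
by apply: contraTneq evb => ->; rewrite irr.
Qed.

Lemma edge_incomp_at w x y : edge_incomp inc w x x y = inc x w y.
Proof.
apply/edge_incompP/idP => [[v [a [b [H /same_edgeP s1 /same_edgeP s2]]]]|H].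
  have [nab nva nvb] := incsys_neq H.
  by case: s1 s2 => -[E1 E2] [][F1 F2]; subst; rewrite ?eqxx in nab nva nvb.
by exists x, w, y; rewrite H same_edge_refl same_edge_flipl same_edge_refl.
Qed.

Lemma edge_incomp_common w a c : edge_incomp inc a w c w = inc w a c.
Proof. by rewrite edge_incomp_flipr edge_incomp_at. Qed.

End Edges.

Section Consecutive.
Variable T : finType.
Implicit Types (s : seq T) (a b v w x y : T).

Fixpoint consecutive s x y : bool :=
  match s with
  | a :: ((b :: _) as s') => same_edge a b x y || consecutive s' x y
  | _ => false
  end.

Lemma consecutive_cons2 a b s x y :
  consecutive [:: a, b & s] x y = same_edge a b x y || consecutive (b :: s) x y.
Proof. by []. Qed.

Lemma consecutiveC s x y : consecutive s x y = consecutive s y x.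
Proof. by elim: s => [|a [|b s] IH] //; rewrite !consecutive_cons2 IH same_edge_flipr. Qed.

Lemma consecutive_mem s x y : consecutive s x y -> (x \in s) && (y \in s).
Proof.
elim: s => [|a [|b s] IH] //; rewrite consecutive_cons2 => /orP[/same_edgeP[][<- <-]|/IH].
- by rewrite !inE !eqxx ?orbT.
- by rewrite !inE !eqxx ?orbT.
by rewrite !inE => /andP[-> ->]; rewrite !orbT.
Qed.

Lemma consecutiveP x0 s x y :
  reflect (exists2 i, (i.+1 < size s)%N & same_edge (nth x0 s i) (nth x0 s i.+1) x y)
          (consecutive s x y).
Proof.
elim: s => [|a [|b s] IH]; first by right => -[].
  by right => -[].
apply: (iffP orP) => [[H|/IH[i Hi H]]|[[|i] Hi H]]; first by exists 0%N.
- by exists i.+1.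
- by left.
by right; apply/IH; exists i.
Qed.

Lemma consecutive_cat z s1 b s2 x y : s1 != [::] ->
  consecutive (s1 ++ b :: s2) x y =
  [|| consecutive s1 x y, consecutive (b :: s2) x y | same_edge (last z s1) b x y].
Proof.
case: s1 => // a s1 _; change (last z (a :: s1)) with (last a s1).
elim: s1 a => [|c s1 IH] a; first by rewrite [_ ++ _]/= consecutive_cons2 orbC.
by rewrite [_ ++ _]/= !consecutive_cons2 -cat_cons IH /=; case: (same_edge a c x y).
Qed.

Lemma consecutive_rev s x y : consecutive (rev s) x y = consecutive s x y.
Proof.
elim: s => [|a [|b s] IH] //.
have ne : rev (b :: s) != [::] by rewrite rev_cons; case: (rev s).
rewrite rev_cons -cats1 (consecutive_cat a) // IH rev_cons last_rcons.
rewrite consecutive_cons2 (same_edge_flipl b).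
by case: (consecutive (b :: s) x y); case: (same_edge a b x y).
Qed.

Lemma consecutive_head v s y : v \notin s -> consecutive (v :: s) v y -> y = head v s.
Proof.
case: s => [|b s] // vs; rewrite consecutive_cons2.
case/orP=> [/same_edgeP[[_ ->]|[_ bv]]|/consecutive_mem/andP[vbs _]] //.
  by move: vs; rewrite -bv mem_head.
by move: vs; rewrite vbs.
Qed.

Variable inc : T -> T -> T -> bool.

Lemma compatible_pathP s :
  compatible_path inc s <-> forall v a b, consecutive s v a -> consecutive s v b -> ~~ inc v a b.
Proof.
split=> [C v a b /(consecutiveP v)[i Hi Hsi] /(consecutiveP v)[j Hj Hsj]|C x0 i j Hi Hj].
  apply: contraNN (C v i j Hi Hj) => H; apply/edge_incompP; exists v, a, b.
  by rewrite H -same_edgeC Hsi -same_edgeC Hsj.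
apply/edge_incompP => -[v [a [b [H s1 s2]]]].
have va : consecutive s v a by apply/(consecutiveP x0); exists i; rewrite // same_edgeC.
have vb : consecutive s v b by apply/(consecutiveP x0); exists j; rewrite // same_edgeC.
by move: (C v a b va vb); rewrite H.
Qed.

Variable e : rel T.
Hypothesis esym : symmetric e.

Lemma is_gpathP s :
  reflect [/\ s != [::], uniq s & forall a b, consecutive s a b -> e a b] (is_gpath e s).
Proof.
case: s => [|x s] /=; first by right => -[].
apply: (iffP andP) => [[pth us]|[_ us H]]; split => //.
  elim: s x {us} pth => [|b s IH] x //= /andP[exb /IH H] a c /orP[|/H //].
  by case/same_edgeP => -[<- <-] //; rewrite esym.
elim: s x {us} H => [|b s IH] x //= H.
by rewrite H ?same_edge_refl //= IH // => a c acs; rewrite H ?acs ?orbT.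
Qed.

Hypotheses (sg : simple_graph e) (isy : incsys e inc).

Lemma is_bad_nbE s w x : uniq s ->
  is_bad_nb e inc s w x = [&& x \in s, e w x & [exists y, consecutive s x y && inc x w y]].
Proof.
move=> us; rewrite /is_bad_nb; case xs: (x \in s) => //=.
case: (e w x) => //=; rewrite !(edge_incomp_at sg isy).
have nx := nth_index x xs; have ix := index_mem x s; rewrite xs in ix.
apply/idP/existsP => [/orP[/andP[i0 H]|/andP[i1 H]]|[y /andP[/(consecutiveP x)[j Hj]]]].
- exists (nth x s (index x s).-1); rewrite H andbT; apply/(consecutiveP x).
  by exists (index x s).-1; rewrite prednK // nx ?ix // same_edge_flipl same_edge_refl.
- exists (nth x s (index x s).+1); rewrite H andbT; apply/(consecutiveP x).
  by exists (index x s); rewrite ?nx ?same_edge_refl.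
case/same_edgeP => -[E1 E2] H.
  have -> : index x s = j by rewrite -E1 index_uniq // ltnW.
  by rewrite Hj E2 H orbT.
have -> : index x s = j.+1 by rewrite -E2 index_uniq.
by rewrite /= E1 H.
Qed.

End Consecutive.

Section PathModification.
Variables (T : finType) (e : rel T) (inc : T -> T -> T -> bool).
Hypotheses (sg : simple_graph e) (isy : incsys e inc).
Implicit Types (s : seq T) (a c v w x y z : T).

Lemma compatible_path_extend s s' a c :
  (forall x y, consecutive s' x y -> consecutive s x y || same_edge a c x y) ->
  compatible_path inc s ->
  (forall y, consecutive s a y -> ~~ inc a c y) ->
  (forall y, consecutive s c y -> ~~ inc c a y) ->
  compatible_path inc s'.
Proof.
move=> sub /compatible_pathP C Ha Hc; apply/compatible_pathP.
have old_new v x y : consecutive s v x || same_edge a c v x -> consecutive s v y -> ~~ inc v x y.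
  by case/orP=> [|/same_edgeP[][<- <-]]; [exact: C|exact: Ha|exact: Hc].
move=> v x y /sub vx /sub /orP[vy|vy]; first exact: old_new.
case/orP: vx => [vx|vx]; first by rewrite isy.2; apply: old_new; rewrite ?vy ?orbT.
apply/negP => /(incsys_neq sg isy) [nxy nvx nvy].
by case/same_edgeP: vx vy => -[E1 E2] /same_edgeP[][F1 F2]; subst; rewrite ?eqxx in nxy nvx nvy.
Qed.

Lemma card_bad_nbrs_extend s s' a c w : uniq s -> uniq s' ->
  (forall x y, consecutive s' x y -> consecutive s x y || same_edge a c x y) ->
  (#|bad_nbrs e inc s' w| <= #|bad_nbrs e inc s w| + inc a w c + inc c w a)%N.
Proof.
move=> us us' sub.
have card_if z0 (b : bool) : #|[set z | (z == z0) && b]| = b.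
  case: b => /=; last by apply: eq_card0 => z; rewrite !inE andbF.
  by rewrite -(cards1 z0); apply: eq_card => z; rewrite !inE andbT.
set new := [set z | (z == a) && inc a w c] :|: [set z | (z == c) && inc c w a].
apply: (@leq_trans #|bad_nbrs e inc s w :|: new|); last first.
  rewrite -addnA -(card_if a) -(card_if c); apply: leq_trans (leq_card_setU _ _) _.
  by rewrite leq_add2l leq_card_setU.
apply/subset_leq_card/subsetP => z; rewrite !inE !(is_bad_nbE sg isy) //.
case/and3P=> zs wz /existsP[y /andP[/sub /orP[zy|/same_edgeP[][<- <-]] H]].
- have /andP[zs' _] := consecutive_mem zy.
  by rewrite zs' wz; apply/orP; left; apply/existsP; exists y; rewrite zy H.
- by rewrite H eqxx !orbT.
- by rewrite H eqxx !orbT.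
Qed.

End PathModification.

Section Counting.
Variables (R : realFieldType) (T : finType).

Lemma card_heavy_le (P : T -> T -> bool) (S : {set T}) (B c : R) : 0 < c ->
  (forall w z, P w z -> z \in S) -> (forall z, #|[set w | P w z]|%:R <= B) ->
  #|[set w | c <= #|[set z | P w z]|%:R]|%:R * c <= #|S|%:R * B.
Proof.
move=> c0 PS PB; set H := [set w | _].
have card_sum (Q : pred T) : #|[set z | Q z]| = (\sum_z Q z)%N.
  by rewrite -sum1_card big_mkcond; apply: eq_bigr => z _; rewrite inE; case: (Q z).
have double_count : (\sum_w #|[set z | P w z]| = \sum_z #|[set w | P w z]|)%N.
  under eq_bigr do rewrite card_sum.
  by rewrite exchange_big; apply: eq_bigr => z _; rewrite card_sum.
apply: (@le_trans _ _ (\sum_w (#|[set z | P w z]|%:R : R))).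
  rewrite (bigID (mem H)) /= -[X in X <= _]addr0 lerD ?sumr_ge0 //.
  by rewrite mulrC mulr_natr -sumr_const; apply: ler_sum => w; rewrite inE.
rewrite -natr_sum double_count natr_sum (bigID (mem S)) /= [X in _ + X]big1 ?addr0; last first.
  move=> z zS; rewrite (_ : [set w | P w z] = set0) ?cards0 //.
  by apply/setP => w; rewrite !inE; apply: contraNF zS => /PS.
by rewrite mulrC mulr_natr -sumr_const; apply: ler_sum => z _; apply: PB.
Qed.

Variables (e : rel T) (inc : T -> T -> T -> bool) (D : R).
Hypotheses (sg : simple_graph e) (isy : incsys e inc).
Hypotheses (bd : bounded e inc D) (D_ge0 : 0 <= D).

Lemma card_inc_le v a : #|[set b | inc v a b]|%:R <= D.
Proof.
have [eva|nva] := boolP (e v a); first exact: bd.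
rewrite (_ : [set b | inc v a b] = set0) ?cards0 //.
by apply/setP => b; rewrite !inE; apply: contraNF nva => /isy.1/andP[].
Qed.

Lemma card_correlated_le (g : R) v : 0 < g * #|T|%:R ->
  #|[set w | gamma_correlated inc g w v]|%:R * (g * #|T|%:R) <= #|T|%:R * D.
Proof.
move=> gn.
have := @card_heavy_le (fun w u => edge_incomp inc w u v u) [set: T] D _ gn.
rewrite cardsT; apply=> // z.
apply: le_trans (card_inc_le z v); rewrite ler_nat; apply: subset_leq_card.
by apply/subsetP => w; rewrite !inE (edge_incomp_common sg isy) isy.2.
Qed.

Lemma card_bad_for_le p z : #|[set w | is_bad_nb e inc p w z]|%:R <= 2%:R * D.
Proof.
set y1 := nth z p (index z p).-1; set y2 := nth z p (index z p).+1.
have sub : [set w | is_bad_nb e inc p w z] \subset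
           [set w | inc z y1 w] :|: [set w | inc z y2 w].
  apply/subsetP => w; rewrite !inE /is_bad_nb !(edge_incomp_at sg isy) -/y1 -/y2.
  by rewrite (isy.2 z y1) (isy.2 z y2) => /and3P[_ _ /orP[/andP[_ ->]|/andP[_ ->]]]; rewrite ?orbT.
apply: le_trans (_ : (#|[set w | inc z y1 w]| + #|[set w | inc z y2 w]|)%:R <= _).
  by rewrite ler_nat; apply: leq_trans (subset_leq_card sub) (leq_card_setU _ _).
by rewrite natrD mulr2n mulrDl mul1r lerD ?card_inc_le.
Qed.

End Counting.

Lemma card_preimset_in_le (T : finType) (A S : {set T}) (f : T -> T) :
  {in A &, injective f} -> (#|[set x in A | f x \in S]| <= #|S|)%N.
Proof.
move=> f_inj; rewrite -(@card_in_imset _ _ f); last first.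
  by move=> x y; rewrite !inE => /andP[xA _] /andP[yA _]; apply: f_inj.
apply/subset_leq_card/subsetP => y /imsetP[x]; rewrite inE => /andP[_ fxS] ->.
exact: fxS.
Qed.

Lemma reroute_spec (T : finType) (p : seq T) v0 x : head v0 p = v0 -> uniq p ->
  x \in p -> x != v0 ->
  let u := nth v0 p (index x p).-1 in
  [/\ perm_eq (reroute p x) p,
      forall a b, consecutive (reroute p x) a b -> consecutive p a b || same_edge v0 x a b,
      consecutive p u x,
      forall y, head y (reroute p x) = u
    & forall y, last y (reroute p x) = last v0 p].
Proof.
move=> hp up xp xv0 u; set i := index x p.
have i_gt0 : (0 < i)%N.
  by rewrite lt0n; apply: contra_neq xv0 => i0; rewrite -(nth_index v0 xp) -/i i0 nth0.
set t := take i p; set d := drop i.+1 p.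
have Ed : drop i p = x :: d by rewrite (drop_nth v0) ?index_mem // nth_index.
have Ept : p = t ++ x :: d by rewrite -Ed cat_take_drop.
have szt : size t = i by rewrite size_take index_mem xp.
have [t' Et] : exists t', t = v0 :: t'.
  move: hp; rewrite Ept; case: (t) szt => [/= i0|a s _ /= ->]; last by exists s.
  by rewrite -i0 in i_gt0.
have lt : last v0 t = u by rewrite -nth_last szt /t nth_take // prednK.
have Eq : reroute p x = rev t ++ x :: d by rewrite /reroute -/i Ed.
have rtne : rev t != [::] by rewrite Et rev_cons -size_eq0 size_rcons.
split.
- by rewrite Eq [X in perm_eq _ X]Ept perm_cat2r perm_rev.
- move=> a b; rewrite Eq (consecutive_cat v0) // consecutive_rev Et rev_cons last_rcons.
  by rewrite -Et Ept (consecutive_cat v0) ?Et //; case/or3P => ->; rewrite ?orbT.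
- by rewrite {1}Ept (consecutive_cat v0) ?Et // -Et lt same_edge_refl !orbT.
- move=> y; rewrite Eq -lt; move: (t) rtne; case/lastP => [|s l] // _.
  by rewrite rev_rcons last_rcons.
- by move=> y; rewrite Eq [in RHS]Ept !last_cat.
Qed.

Lemma gamma_goodE (R : realDomainType) (T : finType) (e : rel T) inc (g : R) q w :
  gamma_good e inc g q w = (#|bad_nbrs e inc q w|%:R < g * (size q)%:R).
Proof. by rewrite /gamma_good /gamma_bad -ltNge. Qed.

Section MaximalSmoothPath.
Variables (R : rcfType) (T : finType) (e : rel T) (inc : T -> T -> T -> bool).
Variables (mu : R) (p : seq T) (v0 : T).
Hypotheses (sg : simple_graph e) (mu_gt0 : 0 < mu) (mu_small : mu <= 1 / 225%:R).
Hypothesis deg_large : forall v, 15%:R * Num.sqrt mu * #|T|%:R <= (deg e v)%:R.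
Hypotheses (isy : incsys e inc) (bd : bounded e inc (mu * #|T|%:R)).
Hypotheses (smooth_p : smooth e inc mu p) (head_p : head v0 p = v0).
Hypothesis p_maximal : forall w, w \notin p -> ~ smooth e inc mu (w :: p).

Local Notation n := (#|T|%:R : R).
Local Notation s := (Num.sqrt mu).
Local Notation L := ((size p)%:R : R).
Local Notation v1 := (head v0 (behead p)).
Local Notation vl := (last v0 p).
Local Notation bad q w := (#|bad_nbrs e inc q w|%:R : R).
Local Notation outside_nbrs := [set w | e v0 w & w \notin p].
Local Notation inside_nbrs := [set w | e v0 w & w \in p].

Lemma p_cons : p = v0 :: behead p.
Proof. by have [/(is_gpathP sg.1)[]] := smooth_p; case: p head_p => //= a q ->. Qed.

Lemma p_uniq : uniq p.
Proof. by have [/(is_gpathP sg.1)[]] := smooth_p. Qed.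

Lemma p_edge a b : consecutive p a b -> e a b.
Proof. by have [/(is_gpathP sg.1)[_ _ /(_ a b)]] := smooth_p. Qed.

Lemma p_ends :
  [/\ bad p v0 < 8%:R * s * L, bad p vl < 8%:R * s * L & gamma_uncorrelated inc s v0 vl].
Proof.
have [_ [_ /(_ v0) [g0 gl unc]]] := smooth_p.
by move: g0 gl unc; rewrite head_p !gamma_goodE.
Qed.

Lemma n_gt0 : 0 < n.
Proof. by rewrite ltr0n; apply/card_gt0P; exists v0. Qed.

Lemma s_gt0 : 0 < s.
Proof. by rewrite sqrtr_gt0. Qed.

(* Rewrite with [in mu * _]mu_sqrt: mu also occurs inside s. *)
Lemma mu_sqrt : mu = s * s.
Proof. by rewrite -expr2 sqr_sqrtr // ltW. Qed.

Lemma mu_n_le : mu * n <= s * n / 15%:R.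
Proof.
have s15 : s <= 1 / 15%:R.
  by have h := mu_small; have sq := mu_sqrt; have s0 := s_gt0; nra.
have sn : 0 <= s * n by rewrite mulr_ge0 // ltW ?s_gt0 ?n_gt0.
by have := ler_wpM2r sn s15; rewrite [in mu * _]mu_sqrt; lra.
Qed.

Lemma size_p_le : L <= n.
Proof. by rewrite ler_nat -(card_uniqP p_uniq) max_card. Qed.

Lemma sL_gt0 : 0 < s * L.
Proof. by rewrite mulr_gt0 ?s_gt0 // p_cons ltr0n. Qed.

Lemma sn_gt0 : 0 < s * n.
Proof. by rewrite mulr_gt0 ?s_gt0 ?n_gt0. Qed.

Lemma bound_ge0 : 0 <= mu * n.
Proof. by rewrite mulr_ge0 // ltW ?n_gt0. Qed.

Definition heavy : {set T} := [set u | 7%:R * s * L <= bad p u].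
Definition end_correlated : {set T} := [set w | gamma_correlated inc s w vl].
(* The new edge v_0 w is incompatible with v_0 v_1, or it makes v_0 or w a bad
   neighbour of v_l. *)
Definition conflicting : {set T} := [set w | [|| inc v0 v1 w, inc v0 vl w | inc w v0 vl]].
Definition spoiling : {set T} := heavy :|: end_correlated.

Lemma card_heavy : #|heavy|%:R * 7%:R <= 2%:R * (s * n).
Proof.
have c_gt0 : 0 < 7%:R * s * L by rewrite -mulrA mulr_gt0 ?sL_gt0.
have size_p : #|[set z | z \in p]| = size p by rewrite cardsE (card_uniqP p_uniq).
have in_p w z : is_bad_nb e inc p w z -> z \in [set z | z \in p].
  by rewrite inE => /and3P[].
have := card_heavy_le c_gt0 in_p (card_bad_for_le sg isy bd bound_ge0 p).
rewrite size_p -/heavy [in mu * _]mu_sqrt => h.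
by rewrite -(ler_pM2r sL_gt0); lra.
Qed.

Lemma card_end_correlated : #|end_correlated|%:R <= s * n.
Proof.
have := card_correlated_le sg isy bd bound_ge0 vl sn_gt0.
rewrite -/end_correlated [in mu * _]mu_sqrt => h.
by rewrite -(ler_pM2r sn_gt0); lra.
Qed.

Lemma card_conflicting : #|conflicting|%:R <= 2%:R * (mu * n) + s * n.
Proof.
have card_C0 : #|[set w | inc w v0 vl]|%:R < s * n.
  have [_ _] := p_ends; rewrite /gamma_uncorrelated /gamma_correlated -ltNge.
  suff -> : [set w | inc w v0 vl] = [set w | edge_incomp inc v0 w vl w] by [].
  by apply/setP => w; rewrite !inE (edge_incomp_common sg isy).
set I1 := [set w | inc v0 v1 w]; set I2 := [set w | inc v0 vl w].
have : (#|conflicting| <= #|I1| + #|I2| + #|[set w | inc w v0 vl]|)%N.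
  have sub : conflicting \subset I1 :|: I2 :|: [set w | inc w v0 vl].
    by apply/subsetP => w; rewrite !inE orbA.
  apply: leq_trans (subset_leq_card sub) _; apply: leq_trans (leq_card_setU _ _) _.
  by rewrite leq_add2r leq_card_setU.
rewrite -(ler_nat R) !natrD.
have := card_inc_le isy bd bound_ge0 v0 v1; have := card_inc_le isy bd bound_ge0 v0 vl.
lra.
Qed.

Lemma card_exceptional : 2%:R * (#|conflicting| + #|spoiling|)%:R <= 5%:R * (s * n).
Proof.
have : (#|spoiling| <= #|heavy| + #|end_correlated|)%N by apply: leq_card_setU.
rewrite -(ler_nat R) natrD.
have := card_heavy; have := card_end_correlated; have := card_conflicting.
have := mu_n_le; have := sn_gt0; rewrite natrD; lra.
Qed.

Lemma v0_notin_behead : v0 \notin behead p.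
Proof. by have := p_uniq; rewrite p_cons => /andP[]. Qed.

Lemma smooth_cons w : w \notin p -> e v0 w -> w \notin conflicting -> w \notin spoiling ->
  smooth e inc mu (w :: p).
Proof.
move=> wp ew; rewrite !inE !negb_or => /and3P[nI1 nI2 nC] /andP[nH nCl].
have sub x y : consecutive (w :: p) x y -> consecutive p x y || same_edge v0 w x y.
  by rewrite p_cons consecutive_cons2 -p_cons same_edge_flipl orbC.
have uwp : uniq (w :: p) by rewrite /= wp p_uniq.
have [_ [cp _]] := smooth_p; have [g0 gl _] := p_ends.
have no_loop a b : (inc a a b = false) * (inc a b b = false).
  by split; apply/negP => /(incsys_neq sg isy)[]; rewrite eqxx.
split; [|split].
- apply/(is_gpathP sg.1); split=> // a b /sub /orP[/p_edge //|/same_edgeP[][<- <-] //].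
  by rewrite sg.1.
- apply: (compatible_path_extend sg isy sub cp) => y.
    by rewrite p_cons => /consecutive_head -> //; rewrite ?v0_notin_behead // isy.2.
  by move=> /consecutive_mem/andP[wp' _]; rewrite wp' in wp.
move=> x0 /=; have -> : last w p = vl by rewrite p_cons.
rewrite !gamma_goodE /= -addn1 natrD; split=> //.
- have := card_bad_nbrs_extend sg isy w p_uniq uwp sub.
  rewrite !no_loop !addn0 -(ler_nat R).
  by move: nH; rewrite -ltNge; have := sL_gt0; have := s_gt0; lra.
- have := card_bad_nbrs_extend sg isy vl p_uniq uwp sub.
  rewrite (negbTE nI2) isy.2 (negbTE nC) !addn0 -(ler_nat R).
  by have := sL_gt0; have := s_gt0; lra.
Qed.

Lemma outside_nbrs_exceptional : outside_nbrs \subset conflicting :|: spoiling.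
Proof.
apply/subsetP => w; rewrite inE => /andP[ew wp].
apply: contraT; rewrite in_setU negb_or => /andP[nC nS].
by case: (p_maximal wp); apply: smooth_cons.
Qed.

Lemma deg_v0_le : (deg e v0 <= #|conflicting| + #|spoiling| + #|inside_nbrs|)%N.
Proof.
apply: leq_trans (_ : #|outside_nbrs :|: inside_nbrs| <= _)%N.
  apply: subset_leq_card; apply/subsetP => u; rewrite !inE.
  by case: (e v0 u); case: (u \in p).
apply: leq_trans (leq_card_setU _ _) _; rewrite leq_add2r.
exact: leq_trans (subset_leq_card outside_nbrs_exceptional) (leq_card_setU _ _).
Qed.

Lemma size_p_large : 12%:R * (s * n) <= L.
Proof.
have inside_le : (#|inside_nbrs| <= size p)%N.
  rewrite -(card_uniqP p_uniq) -cardsE; apply: subset_leq_card.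
  by apply/subsetP => u; rewrite !inE => /andP[].
have := leq_trans deg_v0_le (leq_add (leqnn _) inside_le).
rewrite -(ler_nat R) !natrD; have := card_exceptional; have := deg_large v0.
by have := sn_gt0; rewrite natrD; lra.
Qed.

Definition predecessor x := nth v0 p (index x p).-1.

Definition rerouting_set : {set T} :=
  [set x in good_nbrs e inc p v0 | (x \notin conflicting) && (predecessor x \notin spoiling)].

Lemma mem_good_nbrs_v0 x : x \in good_nbrs e inc p v0 ->
  [/\ x \in p, e v0 x, x != v0, (0 < index x p)%N & ~~ is_bad_nb e inc p v0 x].
Proof.
rewrite inE => /and3P[xp ex nb].
have xv0 : x != v0 by apply: contraTneq ex => ->; rewrite sg.2.
split=> //; rewrite lt0n; apply: contra_neq xv0 => i0.
by rewrite -(nth_index v0 xp) i0 p_cons.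
Qed.

Lemma predecessor_inj : {in good_nbrs e inc p v0 &, injective predecessor}.
Proof.
move=> x y /mem_good_nbrs_v0[xp _ _ ix _] /mem_good_nbrs_v0[yp _ _ iy _] Exy.
have index_pred z : z \in p -> (0 < index z p)%N -> index (predecessor z) p = (index z p).-1.
  by move=> zp iz; rewrite index_uniq ?p_uniq // (leq_ltn_trans (leq_pred _)) ?index_mem.
have : index x p = index y p.
  by rewrite -(prednK ix) -(prednK iy) -index_pred // -index_pred // Exy.
by move/(congr1 (nth v0 p)); rewrite !nth_index.
Qed.

Lemma smooth_reroute x : x \in rerouting_set -> smooth e inc mu (reroute p x).
Proof.
rewrite inE => /andP[xG]; rewrite !inE !negb_or => /andP[/and3P[nI1 nI2 nC] /andP[nH nCl]].
have [xp ex xv0 _ nb] := mem_good_nbrs_v0 xG.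
have [prm sub u_x hq lq] := reroute_spec head_p p_uniq xp xv0.
rewrite /predecessor in nH nCl; set u := nth v0 p _ in u_x hq nH nCl.
have uq : uniq (reroute p x) by rewrite (perm_uniq prm) p_uniq.
have szq : size (reroute p x) = size p by rewrite (perm_size prm).
have x_ok y : consecutive p x y -> ~~ inc x v0 y.
  move=> xy; apply: contra nb => H; rewrite (is_bad_nbE sg isy) ?p_uniq // xp ex.
  by apply/existsP; exists y; rewrite xy H.
have [_ [cp _]] := smooth_p; have [_ gl _] := p_ends.
split; [|split].
- apply/(is_gpathP sg.1); split=> //; first by rewrite -size_eq0 szq p_cons.
  move=> a b /sub /orP[/p_edge //|/same_edgeP[][<- <-] //].
  by rewrite sg.1.
- apply: (compatible_path_extend sg isy sub cp) x_ok => y.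
  by rewrite {1}p_cons => /consecutive_head -> //; rewrite ?v0_notin_behead // isy.2.
move=> x0 /=; rewrite hq lq !gamma_goodE szq; split=> //.
- have := card_bad_nbrs_extend sg isy u p_uniq uq sub.
  rewrite [inc x u v0]isy.2 (negbTE (x_ok u _)) 1?consecutiveC // addn0 -(ler_nat R) natrD.
  move: nH; rewrite -ltNge; have := sL_gt0; case: (boolP (inc v0 u x)) => [ux|_]; last first.
    by rewrite addr0; lra.
  (* v_0 becomes a new bad neighbour of u; it fits in the slack between 7 and 8,
     since an incompatibility at v_0 forces mu n >= 1 and |P| >= 12 sqrt(mu) n. *)
  have one_le_sL : 1 <= s * L.
    have one_le : 1 <= mu * n.
      apply: le_trans (card_inc_le isy bd bound_ge0 v0 u); rewrite ler1n.
      by apply/card_gt0P; exists x; rewrite inE.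
    have := ler_wpM2l (ltW s_gt0) size_p_large; rewrite [in mu * _]mu_sqrt in one_le.
    lra.
  by have -> : (true%:R : R) = 1 by []; lra.
- have := card_bad_nbrs_extend sg isy vl p_uniq uq sub.
  rewrite (negbTE nI2) isy.2 (negbTE nC) !addn0 -(ler_nat R).
  by lra.
Qed.

Lemma card_rerouting_set : (deg e v0)%:R - 14%:R * s * n <= #|rerouting_set|%:R.
Proof.
set G0 := good_nbrs e inc p v0; set B0 := bad_nbrs e inc p v0.
set P := [set x in G0 | predecessor x \in spoiling].
have cG0 : (#|G0| <= #|rerouting_set| + #|conflicting| + #|spoiling|)%N.
  have sub : G0 \subset rerouting_set :|: conflicting :|: P.
    apply/subsetP => x xG; rewrite !in_setU [x \in rerouting_set]inE [x \in P]inE xG /=.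
    by case: (x \in conflicting); case: (predecessor x \in spoiling).
  apply: leq_trans (subset_leq_card sub) _; apply: leq_trans (leq_card_setU _ _) _.
  by apply: leq_add; [apply: leq_card_setU | apply: card_preimset_in_le predecessor_inj].
have inside_le : (#|inside_nbrs| <= #|G0| + #|B0|)%N.
  apply: leq_trans (leq_card_setU _ _); apply: subset_leq_card.
  apply/subsetP => u; rewrite !inE /is_good_nb => /andP[-> ->] /=.
  by case: (is_bad_nb e inc p v0 u).
have := leq_trans deg_v0_le (leq_add (leqnn _) inside_le).
move: cG0; rewrite -!(ler_nat R) !natrD.
have [g0 _ _] := p_ends; have := card_exceptional; have := sn_gt0.
have := ler_wpM2l (ltW s_gt0) size_p_le.
by rewrite natrD; lra.
Qed.

End MaximalSmoothPath.

Theorem lemma2p5 (R : rcfType) (T : finType) (e : rel T)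
    (inc : T -> T -> T -> bool) (mu : R) (p : seq T) (v0 : T) :
  simple_graph e ->
  0 < mu -> mu <= 1 / 225%:R ->
  (forall v, 15%:R * Num.sqrt mu * #|T|%:R <= (deg e v)%:R) ->
  incsys e inc ->
  bounded e inc (mu * #|T|%:R) ->
  smooth e inc mu p ->
  head v0 p = v0 ->
  (forall w, w \notin p -> ~ smooth e inc mu (w :: p)) ->
  exists X : {set T},
    [/\ X \subset good_nbrs e inc p v0,
        (deg e v0)%:R - 14%:R * Num.sqrt mu * #|T|%:R <= #|X|%:R &
        forall x, x \in X -> smooth e inc mu (reroute p x)].
Proof.
move=> sg mu_gt0 mu_small deg_large isy bd smooth_p head_p p_maximal.
exists (rerouting_set e inc mu p v0); split.
- by apply/subsetP => x; rewrite inE => /andP[].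
- exact: card_rerouting_set.
- by move=> x; apply: smooth_reroute.
Qed.
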